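(* Let $I=(E,\mathcal C,c,p,\beta)$ be a BC instance, let $0<\varepsilon<\tfrac12$, and let $R\subseteq E$ be a strict representative set (SRS) of $I$ and $\varepsilon$. Then $R$ is a representative set of $I$ and $\varepsilon$.
   Context: Let $E$ be a finite ground set. A constraint on $E$ is either (i) a matching constraint: an undirected graph $\mathcal C=(V,E)$, whose feasible sets $\mathcal M=\mathcal M(\mathcal C)$ are the matchings of $\mathcal C$; or (ii) a matroid intersection constraint: a pair $\mathcal C=(\mathcal I_1,\mathcal I_2)$ where $(E,\mathcal I_1),(E,\mathcal I_2)$ are matroids given by independence oracles, with $\mathcal M(\mathcal C)=\mathcal I_1\cap\mathcal I_2$. A BC instance is $I=(E,\mathcal C,c,p,\beta)$ with $c,p:E\to\mathbb R_{\ge0}$, $\beta\in\mathbb R_{\ge 0}$; it is a BM instance if $\mathcal C$ is a matching constraint and a BI instance otherwise. A solution is $S\in\mathcal M(\mathcal C)$ with $c(S)\le\beta$ (with $f(S)=\sum_{e\in S}f(e)$); $\mathrm{OPT}(I)$ is the maximum of $p(S)$ over solutions. For $0<\varepsilon<\tfrac12$: $H=\{e\in E: p(e)>\varepsilon\,\mathrm{OPT}(I)\}$; $q(\varepsilon)=\lceil\varepsilon^{-1/\varepsilon}\rceil$; $\mathcal M_{\le q(\varepsilon)}=\{A\in\mathcal M(\mathcal C):|A|\le q(\varepsilon)\}$. A set $R\subseteq E$ is a representative set of $I$ and $\varepsilon$ if there is a solution $S$ of $I$ with $S\cap H\subseteq R$ and $p(S)\ge(1-4\varepsilon)\mathrm{OPT}(I)$.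 For $S\in\mathcal M_{\le q(\varepsilon)}$, a set $Z_S\subseteq E$ is a replacement of $S$ (for $I,\varepsilon$) if: (1) $(S\setminus H)\cup Z_S\in\mathcal M_{\le q(\varepsilon)}$; (2) $c(Z_S)\le c(S\cap H)$; (3) $p((S\setminus H)\cup Z_S)\ge(1-\varepsilon)p(S)$; (4) $|Z_S|\le|S\cap H|$. A set $R\subseteq E$ is a strict representative set (SRS) of $I$ and $\varepsilon$ if every $S\in\mathcal M_{\le q(\varepsilon)}$ has a replacement $Z_S\subseteq R$. *)

From HB Require Import structures.
From mathcomp Require Import all_boot all_order all_algebra.
From mathcomp Require Import reals exp.
Set Implicit Arguments. Unset Strict Implicit. Unset Printing Implicit Defensive.
Import Order.TTheory GRing.Theory Num.Theory.
Local Open Scope ring_scope.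

Definition is_matroid (E : finType) (I : pred {set E}) : Prop :=
  [/\ I set0,
      (forall A B : {set E}, B \subset A -> I A -> I B) &
      (forall A B : {set E}, I A -> I B -> (#|A| < #|B|)%N ->
          exists2 x, x \in B :\: A & I (x |: A))].

(* A constraint on E: either a (multi)graph whose edge set is E, each edge e
   having endpoints (ends e).1, (ends e).2 in V; or a pair of matroids on E. *)
Inductive constraint (E : finType) : Type :=
| MatchingC (V : finType) (ends : E -> V * V)
| MatIntC (I1 I2 : pred {set E}).

Definition valid_constraint (E : finType) (C : constraint E) : Prop :=
  match C with
  | MatchingC _ _ => True
  | MatIntC I1 I2 => is_matroid I1 /\ is_matroid I2
  end.

Definition share_vertex (E V : finType) (ends : E -> V * V) (e f : E) : bool :=
  [|| (ends e).1 == (ends f).1, (ends e).1 == (ends f).2,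
      (ends e).2 == (ends f).1 | (ends e).2 == (ends f).2].

Definition is_matching (E V : finType) (ends : E -> V * V) (S : {set E}) : bool :=
  [forall e in S, forall f in S, (e != f) ==> ~~ share_vertex ends e f].

Definition feasible (E : finType) (C : constraint E) (S : {set E}) : bool :=
  match C with
  | MatchingC _ ends => is_matching ends S
  | MatIntC I1 I2 => I1 S && I2 S
  end.

Section BC.
Variables (R : realType) (E : finType).

Definition sumf (f : E -> R) (S : {set E}) : R := \sum_(e in S) f e.

Definition is_solution (C : constraint E) (c : E -> R) (beta : R) (S : {set E}) : bool :=
  feasible C S && (sumf c S <= beta).

(* OPT(I): maximum profit of a solution (the empty set is always a solution
   and profits are nonnegative, so 0 as the neutral element is harmless). *)
Definition OPT (C : constraint E) (c p : E -> R) (beta : R) : R :=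
  \big[Num.max/0]_(S : {set E} | is_solution C c beta S) sumf p S.

Definition Hset (C : constraint E) (c p : E -> R) (beta eps : R) : {set E} :=
  [set e | p e > eps * OPT C c p beta].

Definition qeps (eps : R) : nat := `|Num.ceil (powR eps (- eps^-1))|%N.

Definition Mq (C : constraint E) (eps : R) (A : {set E}) : bool :=
  feasible C A && (#|A| <= qeps eps)%N.

Definition is_replacement (C : constraint E) (c p : E -> R) (beta eps : R)
    (S Z : {set E}) : Prop :=
  let H := Hset C c p beta eps in
  [/\ Mq C eps ((S :\: H) :|: Z),
      sumf c Z <= sumf c (S :&: H),
      sumf p ((S :\: H) :|: Z) >= (1 - eps) * sumf p S &
      (#|Z| <= #|S :&: H|)%N].

Definition is_SRS (C : constraint E) (c p : E -> R) (beta eps : R) (Rs : {set E}) : Prop :=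
  forall S : {set E}, Mq C eps S ->
    exists Z : {set E}, Z \subset Rs /\ is_replacement C c p beta eps S Z.

Definition is_representative (C : constraint E) (c p : E -> R) (beta eps : R)
    (Rs : {set E}) : Prop :=
  exists S : {set E},
    [/\ is_solution C c beta S,
        S :&: Hset C c p beta eps \subset Rs &
        sumf p S >= (1 - 4 * eps) * OPT C c p beta].
End BC.

(* Let S be an optimal solution, O = p(S), and assume O > 0 (otherwise the
   empty set is a representative solution).  The elements of S of profit
   above eps^2 O form a set T with |T| <= eps^-2 <= q(eps), so T lies in
   M_{<=q(eps)} and has a replacement Z inside R; moreover S :&: H is
   contained in T.  The set A = (T \ H) u Z is feasible, and a general
   exchange property of constraints (proved for matroids via augmentation
   and for matchings by counting neighbours) yields D <= S with
   |D| <= 2 |A \ S| <= 2 |Z| such that A u (S \ D) is feasible.  The solution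
   W = A u ((S \ T) \ D) then
   - costs at most c(T \ H) + c(T :&: H) + c(S \ T) = c(S) <= beta,
   - meets H only inside Z <= R,
   - loses, compared with S, at most eps p(T) <= eps O on T and at most
     |D u Z| eps^2 O <= 3 |S :&: H| eps^2 O <= 3 eps O on the light part S \ T. *)

From HB Require Import structures.
From mathcomp Require Import all_boot all_order all_algebra.
From mathcomp Require Import reals exp.
From mathcomp Require Import zify ring lra.
Import Order.TTheory GRing.Theory Num.Theory.
Set Implicit Arguments. Unset Strict Implicit.

Section Matroids.
Variables (E : finType) (I : pred {set E}).
Hypothesis matroidI : is_matroid I.

Lemma matroid_extend A B : I A -> I B ->
  exists J, [/\ I J, A \subset J, J \subset A :|: B & #|B| <= #|J|].
Proof.
case: matroidI => _ _ Iaug IA IB.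
suff grow k : exists J,
    [/\ I J, A \subset J, J \subset A :|: B & minn #|B| (#|A| + k) <= #|J|].
  have [J [IJ AJ JAB le]] := grow #|B|; exists J; split => //.
  by apply: leq_trans le; rewrite leq_min leqnn leq_addl.
elim: k => [|k [J [IJ AJ JAB le]]].
  by exists A; rewrite subsetUl addn0 geq_minr.
have [small|large] := ltnP #|J| #|B|; last first.
  by exists J; split => //; apply: leq_trans (geq_minl _ _) large.
have [x /setDP[xB xJ] Ix] := Iaug _ _ IJ IB small.
exists (x |: J); split => //.
- exact: subset_trans AJ (subsetUr _ _).
- by rewrite subUset sub1set JAB inE xB orbT.
- by rewrite cardsU1 xJ add1n; lia.
Qed.

Lemma matroid_exchange A S : I A -> I S ->
  exists D : {set E}, [/\ D \subset S, #|D| <= #|A :\: S| & I (A :|: (S :\: D))].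
Proof.
move=> IA IS; have [J [IJ AJ JAS le]] := matroid_extend IA IS.
case: matroidI => _ Isub _.
exists (S :\: A :\: J); split.
- by apply/subsetP => x /setDP[/setDP[]].
- (* |J| = |A| + |(S \ A) :&: J| and |S \ A| = |(S \ A) :&: J| + |D|. *)
  have JA : J :\: A = (S :\: A) :&: J.
    apply/setP => x; rewrite !inE; have := subsetP JAS x; rewrite !inE.
    by case: (x \in A) (x \in J) (x \in S) => [] [] [] //= ->.
  have := cardsID A J; rewrite JA (setIidPr AJ).
  have := cardsID J (S :\: A); have := cardsID A S; have := cardsID S A.
  rewrite setIC; lia.
- apply: Isub IJ; apply/subsetP => x; rewrite !inE.
  case/orP=> [xA|/andP[xD xS]]; first exact: (subsetP AJ).
  have [xA|xNA] := boolP (x \in A); first exact: (subsetP AJ).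
  by move: xD; rewrite xS xNA !andbT => /negPn.
Qed.
End Matroids.

Section Matchings.
Variables (E V : finType) (ends : E -> V * V).

Lemma share_vertexC e f : share_vertex ends e f = share_vertex ends f e.
Proof.
by apply/idP/idP; rewrite /share_vertex => /or4P [] /eqP ->; rewrite eqxx ?orbT.
Qed.

Lemma matching_incident_le1 S v : is_matching ends S ->
  #|[set s in S | (v == (ends s).1) || (v == (ends s).2)]| <= 1.
Proof.
move=> M; apply/card_le1_eqP => s t; rewrite !inE => /andP[sS hs] /andP[tS ht].
apply/eqP/negPn/negP; rewrite eq_sym => neq.
move: M => /forall_inP/(_ s sS)/forall_inP/(_ t tS)/implyP/(_ neq).
by rewrite /share_vertex; case/orP: hs => /eqP <-; case/orP: ht => /eqP <-;
  rewrite eqxx ?orbT.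
Qed.

Lemma matching_neighbours_le2 S z : is_matching ends S ->
  #|[set s in S | share_vertex ends z s]| <= 2.
Proof.
move=> M.
apply: (@leq_trans #|[set s in S | ((ends z).1 == (ends s).1) ||
                                    ((ends z).1 == (ends s).2)] :|:
                    [set s in S | ((ends z).2 == (ends s).1) ||
                                    ((ends z).2 == (ends s).2)]|).
  apply: subset_leq_card; apply/subsetP => s; rewrite !inE /share_vertex.
  by case/andP => -> /or4P [] ->; rewrite ?orbT.
apply: leq_trans (leq_card_setU _ _) _.
by rewrite -[2]/(1 + 1); apply: leq_add; apply: matching_incident_le1.
Qed.

Lemma card_bigcup_le (Z : {set E}) (N : E -> {set E}) k :
  (forall z, #|N z| <= k) -> #|\bigcup_(z in Z) N z| <= k * #|Z|.
Proof.
move=> hN; apply: (@leq_trans (\sum_(z in Z) #|N z|)); last first.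
  by rewrite mulnC -sum_nat_const; apply: leq_sum.
apply: (big_ind2 (fun (X : {set E}) n => #|X| <= n)) => //.
  by rewrite cards0.
by move=> X1 n1 X2 n2 h1 h2; apply: leq_trans (leq_card_setU _ _) (leq_add h1 h2).
Qed.

(* Exchange for matchings: remove from S every edge touching A \ S. *)
Lemma matching_exchange A S : is_matching ends A -> is_matching ends S ->
  exists D : {set E}, [/\ D \subset S, #|D| <= 2 * #|A :\: S|
              & is_matching ends (A :|: (S :\: D))].
Proof.
move=> MA MS; set D := \bigcup_(z in A :\: S) [set s in S | share_vertex ends z s].
have apart e f : e \in A -> f \in S :\: D -> e != f -> ~~ share_vertex ends e f.
  move=> eA /setDP[fS fnD] nef; have [eS|eNS] := boolP (e \in S).
    by move: MS => /forall_inP/(_ e eS)/forall_inP/(_ f fS)/implyP/(_ nef).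
  apply/negP => sh; apply: (negP fnD); apply/bigcupP.
  by exists e; rewrite !inE ?eNS ?eA ?fS ?sh.
exists D; split.
- by apply/bigcupsP => z _; apply/subsetP => s; rewrite inE => /andP[].
- by apply: card_bigcup_le => z; apply: matching_neighbours_le2.
apply/forall_inP => e /setUP[eA|eSD]; apply/forall_inP => f /setUP[fA|fSD];
  apply/implyP => nef.
- by move: MA => /forall_inP/(_ e eA)/forall_inP/(_ f fA)/implyP/(_ nef).
- exact: apart.
- by rewrite share_vertexC; apply: apart => //; rewrite eq_sym.
- move: eSD fSD => /setDP[eS _] /setDP[fS _].
  by move: MS => /forall_inP/(_ e eS)/forall_inP/(_ f fS)/implyP/(_ nef).
Qed.
End Matchings.

Section Feasibility.
Variables (E : finType) (C : constraint E).
Hypothesis validC : valid_constraint C.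

Lemma feasible_subset (A B : {set E}) : B \subset A -> feasible C A -> feasible C B.
Proof.
case: C validC => [V ends _|I1 I2 [[_ sub1 _] [_ sub2 _]]] /= BA.
  move=> /forall_inP M; apply/forall_inP => e eB; apply/forall_inP => f fB.
  by move: (M e (subsetP BA e eB)) => /forall_inP/(_ f (subsetP BA f fB)).
by case/andP=> h1 h2; rewrite (sub1 _ _ BA h1) (sub2 _ _ BA h2).
Qed.

Lemma feasible_set0 : feasible C set0.
Proof.
case: C validC => [V ends _|I1 I2 [[h1 _ _] [h2 _ _]]] /=; last by rewrite h1 h2.
by apply/forall_inP => e; rewrite inE.
Qed.

Lemma feasible_exchange (A S : {set E}) : feasible C A -> feasible C S ->
  exists D : {set E},
    [/\ D \subset S, #|D| <= 2 * #|A :\: S| & feasible C (A :|: (S :\: D))].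
Proof.
case: C validC => [V ends _|I1 I2 [M1 M2]] /=; first exact: matching_exchange.
case/andP=> IA1 IA2 /andP[IS1 IS2].
have [D1 [D1S cardD1 ID1]] := matroid_exchange M1 IA1 IS1.
have [D2 [D2S cardD2 ID2]] := matroid_exchange M2 IA2 IS2.
exists (D1 :|: D2); split; first by rewrite subUset D1S D2S.
  by apply: leq_trans (leq_card_setU _ _) _; rewrite mul2n -addnn leq_add.
have shrink (D' : {set E}) : D' \subset D1 :|: D2 ->
    A :|: (S :\: (D1 :|: D2)) \subset A :|: (S :\: D').
  by move=> sub; apply/setUS/setDS.
case: M1 M2 => _ sub1 _ [_ sub2 _]; apply/andP; split.
  exact: sub1 (shrink _ (subsetUl _ _)) ID1.
exact: sub2 (shrink _ (subsetUr _ _)) ID2.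
Qed.
End Feasibility.

Local Open Scope ring_scope.

Section Sums.
Variables (R : realType) (E : finType).
Implicit Types (f : E -> R) (A B : {set E}).

Lemma sumf_split f A B : sumf f A = sumf f (A :&: B) + sumf f (A :\: B).
Proof. exact: big_setID. Qed.

Lemma sumf_ge0 f A : (forall e, 0 <= f e) -> 0 <= sumf f A.
Proof. by move=> f_ge0; apply: sumr_ge0. Qed.

Lemma sumf_subset f A B : (forall e, 0 <= f e) -> A \subset B -> sumf f A <= sumf f B.
Proof.
move=> f_ge0 AB; rewrite (sumf_split f B A) (setIidPr AB).
by rewrite lerDl sumf_ge0.
Qed.

Lemma sumf_setU f A B : (forall e, 0 <= f e) -> sumf f (A :|: B) <= sumf f A + sumf f B.
Proof.
move=> f_ge0; rewrite (sumf_split f _ A) (setIidPr (subsetUl A B)) lerD2l.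
by apply: sumf_subset => //; apply/subsetP => x /setDP[/setUP[] // ->].
Qed.

Lemma sumf_le_card f A d : (forall e, e \in A -> f e <= d) -> sumf f A <= #|A|%:R * d.
Proof. by move=> le_d; rewrite /sumf mulr_natl -sumr_const; apply: ler_sum. Qed.

Lemma sumf_ge_card f A d : (forall e, e \in A -> d <= f e) -> #|A|%:R * d <= sumf f A.
Proof. by move=> ge_d; rewrite /sumf mulr_natl -sumr_const; apply: ler_sum. Qed.

Lemma OPT_attained (C : constraint E) (c p : E -> R) (beta : R) :
  valid_constraint C -> 0 <= beta ->
  exists S, is_solution C c beta S /\ sumf p S = OPT C c p beta.
Proof.
move=> validC beta_ge0.
have : OPT C c p beta = 0 \/
       exists S, is_solution C c beta S /\ sumf p S = OPT C c p beta.
  rewrite /OPT; apply: (big_ind (fun x => x = 0 \/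
      exists S, is_solution C c beta S /\ sumf p S = x)) => [|x y hx hy|S sol].
  - by left.
  - by rewrite /Num.max; case: ifP.
  - by right; exists S.
case=> [OPT0|//]; exists set0.
by rewrite /is_solution feasible_set0 // /sumf !big_set0 OPT0 beta_ge0.
Qed.
End Sums.

(* Any n <= eps^-2 is at most q(eps) = ceil(eps^(-1/eps)), as -1/eps < -2. *)
Lemma le_qeps (R : realType) (eps : R) (n : nat) :
  0 < eps -> eps < 1 / 2 -> n%:R <= eps ^- 2 -> (n <= qeps eps)%N.
Proof.
move=> eps_gt0 eps_lt hn.
have le_pow : eps ^- 2 <= powR eps (- eps^-1).
  rewrite -powR_invn; last exact: ltW.
  apply: ger_powR; first by rewrite eps_gt0 /=; lra.
  rewrite lerN2; apply: ltW; rewrite -div1r ltr_pdivlMr //; lra.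
have le_ceil := ceil_ge (powR eps (- eps^-1)).
have : (n%:Z)%:~R <= (Num.ceil (powR eps (- eps^-1)))%:~R :> R.
  rewrite -[X in X <= _]/(n%:R); lra.
by rewrite ler_int /qeps => ?; lia.
Qed.

Section Reassembly.
Variables (R : realType) (E : finType) (H S T Z D : {set E}).

(* The solution built from S, its heavy part T, a replacement Z of T and a
   set D of elements of S removed to restore feasibility. *)
Definition reassembled : {set E} := ((T :\: H) :|: Z) :|: ((S :\: T) :\: D).

(* Feasibility of the new solution follows from that of A u (S \ D). *)
Lemma reassembled_subset : reassembled \subset ((T :\: H) :|: Z) :|: (S :\: D).
Proof. by apply/setUS/subsetP => x; rewrite !inE => /andP[-> /andP[_ ->]]. Qed.

Lemma reassembled_H (Rs : {set E}) : Z \subset Rs -> S :&: H \subset T ->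
  reassembled :&: H \subset Rs.
Proof.
move=> ZR SHT; apply/subsetP => x /setIP[/setUP[/setUP[|/(subsetP ZR) //]|]].
  by case/setDP=> _ /negP.
case/setDP=> /setDP[xS xNT] _ xH.
by move: xNT; rewrite (subsetP SHT) // inE xS.
Qed.

Lemma reassembled_cost (c : E -> R) : (forall e, 0 <= c e) -> T \subset S ->
  sumf c Z <= sumf c (T :&: H) -> sumf c reassembled <= sumf c S.
Proof.
move=> c_ge0 TS cZ.
have splitT := sumf_split c T H; have splitS := sumf_split c S T.
rewrite (setIidPr TS) in splitS.
have := sumf_setU (T :\: H) Z c_ge0.
have := sumf_setU ((T :\: H) :|: Z) ((S :\: T) :\: D) c_ge0.
have : sumf c ((S :\: T) :\: D) <= sumf c (S :\: T).
  by apply: sumf_subset => //; apply: subsetDl.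
rewrite /reassembled; lra.
Qed.

Lemma reassembled_profit (p : E -> R) (delta : R) :
  (forall e, 0 <= p e) -> 0 <= delta -> (forall e, e \in S :\: T -> p e <= delta) ->
  sumf p ((T :\: H) :|: Z) + sumf p (S :\: T) - (#|D| + #|Z|)%:R * delta
    <= sumf p reassembled.
Proof.
move=> p_ge0 delta_ge0 light.
have splitW := sumf_split p reassembled ((T :\: H) :|: Z).
rewrite (setIidPr (subsetUl _ _)) in splitW.
have kept : sumf p ((S :\: T) :\: (D :|: Z))
               <= sumf p (reassembled :\: ((T :\: H) :|: Z)).
  apply: sumf_subset => //; apply/subsetP => x; rewrite !inE.
  by case/andP=> /norP[/negbTE-> /negbTE->] /andP[/negbTE-> ->]; rewrite !andbF ?orbT.
have lost : sumf p ((S :\: T) :&: (D :|: Z)) <= (#|D| + #|Z|)%:R * delta.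
  apply: le_trans (_ : #|(S :\: T) :&: (D :|: Z)|%:R * delta <= _).
    by apply: sumf_le_card => e /setIP[/light].
  apply: ler_wpM2r => //; rewrite ler_nat.
  exact: leq_trans (subset_leq_card (subsetIr _ _)) (leq_card_setU _ _).
have := sumf_split p (S :\: T) (D :|: Z); lra.
Qed.
End Reassembly.

Section RepresentativeFromSRS.
Variables (R : realType) (E : finType) (C : constraint E).
Variables (c p : E -> R) (beta eps : R).
Hypotheses (validC : valid_constraint C) (p_ge0 : forall e, 0 <= p e).
Hypotheses (eps_gt0 : 0 < eps) (eps_lt : eps < 1 / 2).
Local Notation O := (OPT C c p beta).
Local Notation H := (Hset C c p beta eps).

Variable S : {set E}.
Hypotheses (feasS : feasible C S) (pS : sumf p S = O) (O_gt0 : 0 < O).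

Definition heavy : {set E} := [set e in S | eps ^+ 2 * O < p e].

Lemma heavy_subset : heavy \subset S.
Proof. by apply/subsetP => x; rewrite inE => /andP[]. Qed.

Lemma profit_heavy : sumf p heavy <= O.
Proof. by rewrite -pS; apply: sumf_subset heavy_subset. Qed.

Lemma light_profit e : e \in S :\: heavy -> p e <= eps ^+ 2 * O.
Proof. by case/setDP=> eS; rewrite inE eS -leNgt. Qed.

(* Every element of S in H is heavy, since eps O >= eps^2 O. *)
Lemma SH_heavy : S :&: H = heavy :&: H.
Proof.
apply/setP => x; rewrite /Hset !inE; case: (x \in S) => //=.
case: (ltP (eps * O) (p x)) => [gt|]; rewrite ?andbF ?andbT //; symmetry.
apply: le_lt_trans gt; rewrite expr2 -mulrA ler_piMl ?mulr_ge0 ?ltW //.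
by have := eps_lt; lra.
Qed.

(* |T| eps^2 O <= p(T) <= O, so |T| <= eps^-2 <= q(eps). *)
Lemma heavy_Mq : Mq C eps heavy.
Proof.
rewrite /Mq (feasible_subset validC heavy_subset feasS) /=; apply: le_qeps => //.
have : #|heavy|%:R * (eps ^+ 2 * O) <= O.
  apply: le_trans (_ : sumf p heavy <= _).
    by apply: sumf_ge_card => e; rewrite inE => /andP[_ /ltW].
  exact: profit_heavy.
rewrite mulrA -[X in _ <= X]mul1r ler_pM2r //.
by rewrite -[eps ^- 2]div1r ler_pdivlMr ?exprn_gt0.
Qed.

Lemma card_SH : #|S :&: H|%:R * (eps * O) <= O.
Proof.
apply: le_trans (_ : sumf p (S :&: H) <= _).
  by apply: sumf_ge_card => e; rewrite !inE => /andP[_ /ltW].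
by rewrite -pS; apply: sumf_subset (subsetIl _ _).
Qed.

Lemma reassembled_near_optimal (Z D : {set E}) :
  is_replacement C c p beta eps heavy Z ->
  (#|D| <= 2 * #|((heavy :\: H) :|: Z) :\: S|)%N ->
  (1 - 4 * eps) * O <= sumf p (reassembled H S heavy Z D).
Proof.
case=> _ _ pZ cardZ cardD.
have cardDZ : (#|D| + #|Z| <= 3 * #|S :&: H|)%N.
  have : (#|((heavy :\: H) :|: Z) :\: S| <= #|Z|)%N.
    apply/subset_leq_card/subsetP => x.
    by case/setDP=> /setUP[/setDP[/(subsetP heavy_subset)-> //]|].
  by move: cardZ cardD; rewrite SH_heavy; lia.
have loss : (#|D| + #|Z|)%:R * (eps ^+ 2 * O) <= 3 * eps * O.
  apply: le_trans (_ : (3 * #|S :&: H|)%:R * (eps ^+ 2 * O) <= _).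
    by rewrite ler_wpM2r ?ler_nat // mulr_ge0 ?exprn_ge0 ?ltW.
  have -> : (3 * #|S :&: H|)%:R * (eps ^+ 2 * O) =
            3 * eps * (#|S :&: H|%:R * (eps * O)) by rewrite natrM; ring.
  by rewrite ler_wpM2l ?card_SH ?mulr_ge0 ?ltW.
have delta_ge0 : 0 <= eps ^+ 2 * O by rewrite mulr_ge0 ?exprn_ge0 ?ltW.
have := @reassembled_profit _ _ H S heavy Z D p _ p_ge0 delta_ge0 light_profit.
have := sumf_split p S heavy; rewrite (setIidPr heavy_subset) pS.
have : eps * sumf p heavy <= eps * O by rewrite ler_wpM2l ?profit_heavy ?ltW.
lra.
Qed.
End RepresentativeFromSRS.

Unset Implicit Arguments. Set Strict Implicit.

Theorem mainTheorem3 (R : realType) (E : finType) (C : constraint E)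
    (c p : E -> R) (beta eps : R) (Rs : {set E}) :
  valid_constraint C ->
  (forall e, 0 <= c e) -> (forall e, 0 <= p e) -> 0 <= beta ->
  0 < eps -> eps < 1 / 2 ->
  is_SRS C c p beta eps Rs ->
  is_representative C c p beta eps Rs.
Proof.
move=> validC c_ge0 p_ge0 beta_ge0 eps_gt0 eps_lt srs.
have [S [/andP[feasS cS] pS]] := OPT_attained c p validC beta_ge0.
have O_ge0 : 0 <= OPT C c p beta by rewrite -pS sumf_ge0.
have [O0|O_neq0] := eqVneq (OPT C c p beta) 0.
  exists set0; rewrite /is_solution feasible_set0 // set0I sub0set /sumf !big_set0.
  by rewrite O0 mulr0 beta_ge0.
have O_gt0 : 0 < OPT C c p beta by rewrite lt0r O_neq0.
have SH := SH_heavy eps_gt0 eps_lt S O_gt0.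
have [Z [ZR repZ]] := srs _ (heavy_Mq validC p_ge0 eps_gt0 eps_lt feasS pS O_gt0).
have [/andP[feasA _] cZ _ _] := repZ.
have [D [_ cardD feasAD]] := feasible_exchange validC feasA feasS.
exists (reassembled (Hset C c p beta eps) S (heavy C c p beta eps S) Z D); split.
- rewrite /is_solution (feasible_subset validC (reassembled_subset _ _ _ _ _) feasAD).
  by rewrite (le_trans _ cS) // reassembled_cost ?heavy_subset // -SH.
- by rewrite reassembled_H // SH subsetIl.
- by move: (reassembled_near_optimal p_ge0 eps_gt0 eps_lt feasS pS O_gt0 repZ cardD).
Qed.
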